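(* For every combinatorial auction with SOS valuations and single-dimensional signals from a signal space of size $k\ge2$, i.e. $s_i\in\{0,1,\dots,k-1\}$ for all $i$, the mechanism $k$-HL is universally ex-post IC-IR and gives a $(k+3)$-approximation to the optimal social welfare: for every true profile $\mathbf{s}$, its expected welfare is at least $\frac{1}{k+3}\max_{T}\sum_i v_{iT_i}(\mathbf{s})$ over allocations $T$.
   Context: Setting: $n$ agents, $m$ items; agent $i$ has private signal $s_i\in\{0,\dots,k-1\}$; her value for bundle $T$ is $v_{iT}(\mathbf{s})\ge0$, public, weakly increasing in each coordinate, strictly in $s_i$; each $v_{iT}$ is SOS: for every coordinate $j$, $s_j$, $\delta\ge0$, $\mathbf{s}'_{-j}\le\mathbf{s}_{-j}$ coordinate-wise, $v(\mathbf{s}'_{-j},s_j+\delta)-v(\mathbf{s}'_{-j},s_j)\ge v(\mathbf{s}_{-j},s_j+\delta)-v(\mathbf{s}_{-j},s_j)$. Allocations assign disjoint bundles; agent utility is value of received bundle at the true profile minus payment; ex-post IC/IR and universal ex-post IC-IR as usual. Random Threshold (on reports $\mathbf{s}$): choose $\ell$ uniformly in $\{1,\dots,k-1\}$; $N_{\ge\ell}=\{i:s_i\ge\ell\}$, $N_{<\ell}$ the rest; for $i\in N_{\ge\ell}$, $\bar v_{iT}=v_{iT}(\mathbf{s}_{N_{<\ell}},\boldsymbol{\ell}_{N_{\ge\ell}})$, else $\bar v_{iT}=0$; allocate $\bar T\in\arg\max\sum_{i\in N_{\ge\ell}}\bar v_{i\bar T_i}$ among agents of $N_{\ge\ell}$;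 agent receiving $\bar T_i$ pays $v_{i\bar T_i}(\mathbf{s}_{-i},\ell-1)$. Random Sampling: split agents uniformly at random into $A,B$; for $i\in B$, $\tilde v_{iT}=v_{iT}(\mathbf{s}_A,\mathbf{0}_B)$, for $i\in A$, $\tilde v_{iT}=0$; allocate $\tilde T\in\arg\max\sum_{i\in B}\tilde v_{i\tilde T_i}$ among agents of $B$; no payments. $k$-HL: run Random Threshold with probability $\frac{k-1}{k+3}$, otherwise Random Sampling. *)

From HB Require Import structures.
From mathcomp Require Import all_boot all_order all_algebra.
Set Implicit Arguments. Unset Strict Implicit. Unset Printing Implicit Defensive.
Import Order.TTheory GRing.Theory Num.Theory.
Local Open Scope ring_scope.

Notation profile n k := {ffun 'I_n -> 'I_k}.

(* v i T s = value of agent i for bundle T (subset of items 'I_m) at profile s *)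
Notation valuation R n m k := ('I_n -> {set 'I_m} -> profile n k -> R).

Definition upd n k (s : profile n k) (i : 'I_n) (x : 'I_k) : profile n k :=
  [ffun j => if j == i then x else s j].

Definition ordPred k (l : 'I_k) : 'I_k :=
  Ordinal (leq_ltn_trans (leq_pred l) (ltn_ord l)).

(* the signal value 0, as an element of 'I_k (k is inhabited via x) *)
Definition ordZero k (x : 'I_k) : 'I_k :=
  Ordinal (leq_ltn_trans (leq0n x) (ltn_ord x)).

Definition valid_valuations (R : realFieldType) n m k (v : valuation R n m k) :=
  [/\
      forall i T s, 0 <= v i T s,
      forall i s, v i set0 s = 0,
      forall i T s j (x y : 'I_k), (x <= y)%N -> v i T (upd s j x) <= v i T (upd s j y),
      forall i T s (x y : 'I_k), T != set0 -> (x < y)%N ->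
        v i T (upd s i x) < v i T (upd s i y) &
      forall i T j (s s' : profile n k) (x y : 'I_k), (x <= y)%N ->
        (forall t, t != j -> (s' t <= s t)%N) ->
        v i T (upd s j y) - v i T (upd s j x) <=
        v i T (upd s' j y) - v i T (upd s' j x)].

Definition allocation n m := 'I_n -> {set 'I_m}.

Definition feasible n m (T : allocation n m) :=
  forall i j, i != j -> [disjoint T i & T j].

Definition feasible_on n m (S : {set 'I_n}) (T : allocation n m) :=
  feasible T /\ forall i, i \notin S -> T i = set0.

Definition argmax_rule (R : realFieldType) n m
  (choose : {set 'I_n} -> ('I_n -> {set 'I_m} -> R) -> allocation n m) :=
  forall S w, feasible_on S (choose S w) /\
    forall T, feasible_on S T ->
      \sum_(i in S) w i (T i) <= \sum_(i in S) w i (choose S w i).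

Definition mechanism (R : realFieldType) n m k :=
  profile n k -> allocation n m * ('I_n -> R).

Definition capAt n k (l : 'I_k) (s : profile n k) : profile n k :=
  [ffun j => if (l <= s j)%N then l else s j].

Definition RT_mech (R : realFieldType) n m k (v : valuation R n m k)
  (choose : {set 'I_n} -> ('I_n -> {set 'I_m} -> R) -> allocation n m)
  (l : 'I_k) : mechanism R n m k :=
  fun s =>
    let S := [set i | (l <= s i)%N] in
    let w := fun i T => if i \in S then v i T (capAt l s) else 0 in
    let A := choose S w in
    (A, fun i => if i \in S then v i (A i) (upd s i (ordPred l)) else 0).

Definition zeroOn n k (A : {set 'I_n}) (s : profile n k) : profile n k :=
  [ffun j => if j \in A then s j else ordZero (s j)].

Definition RS_mech (R : realFieldType) n m k (v : valuation R n m k)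
  (choose : {set 'I_n} -> ('I_n -> {set 'I_m} -> R) -> allocation n m)
  (A : {set 'I_n}) : mechanism R n m k :=
  fun s =>
    let B := ~: A in
    let w := fun i T => if i \in B then v i T (zeroOn A s) else 0 in
    (choose B w, fun _ => 0).

Definition exPost_IC_IR (R : realFieldType) n m k (v : valuation R n m k)
  (M : mechanism R n m k) :=
  forall (s : profile n k) (i : 'I_n) (x : 'I_k),
    let u r := v i ((M r).1 i) s - (M r).2 i in
    0 <= u s /\ u (upd s i x) <= u s.

Definition welfare (R : realFieldType) n m k (v : valuation R n m k)
  (T : allocation n m) (s : profile n k) : R :=
  \sum_i v i (T i) s.

(* expected welfare of k-HL at truthful profile s:
   w.p. (k-1)/(k+3) Random Threshold with l uniform in {1,...,k-1},
   otherwise Random Sampling with a uniformly random split A (B = ~: A). *)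
Definition kHL_welfare (R : realFieldType) n m k (v : valuation R n m k)
  (chRT chRS : {set 'I_n} -> ('I_n -> {set 'I_m} -> R) -> allocation n m)
  (s : profile n k) : R :=
  (k.-1)%:R / (k + 3)%:R *
    ((k.-1)%:R^-1 * \sum_(l : 'I_k | (0 < l)%N) welfare v (RT_mech v chRT l s).1 s)
  + (1 - (k.-1)%:R / (k + 3)%:R) *
    ((2 ^ n)%:R^-1 * \sum_(A : {set 'I_n}) welfare v (RS_mech v chRS A s).1 s).

From HB Require Import structures.
From mathcomp Require Import all_boot all_order all_algebra.
From mathcomp Require Import zify ring lra.
Import Order.TTheory GRing.Theory Num.Theory.
Set Implicit Arguments. Unset Strict Implicit.
Local Open Scope ring_scope.

(* Incentives: for a fixed threshold l, Random Threshold is a posted-price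
   mechanism for each agent (participate iff s_i >= l, pay the value at signal
   l-1, and the outcome does not depend on the exact report above l); Random
   Sampling charges nothing and the bundle of an agent in B ignores her report.

   Welfare: fix a feasible allocation T and an agent i, and let f = v_i(T_i).
   Telescoping f from signal 0 to s_i and applying SOS at each step bounds f s
   by the values f (capAt l s), 1 <= l <= s_i, plus f at (s_{-i}, 0).  The map
   A |-> f (zeroOn A s) is monotone with diminishing returns (again SOS), hence
   subadditive, so f (s_{-i}, 0) is at most 4 times its average over the random
   splits with i in B.  Each resulting term is dominated by the welfare of the
   corresponding mechanism, since its rule is optimal for the reduced values and
   those are evaluated below the true profile.  Summing over agents and mixing
   with weights (k-1)/(k+3) and 4/(k+3) gives the bound. *)

Section SetFunctions.
Variables (R : realFieldType) (T : finType).

Lemma diminishing_returns_subadditive (g : {set T} -> R) :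
  (forall Y Z : {set T}, Y \subset Z -> g Y <= g Z) ->
  (forall (Y Z : {set T}) c, Y \subset Z -> c \notin Z ->
     g (c |: Z) - g Z <= g (c |: Y) - g Y) ->
  0 <= g set0 ->
  forall X Y, g (X :|: Y) <= g X + g Y.
Proof.
move=> g_mono g_dim g0 X Y; rewrite -(set_enum Y).
elim: (enum Y) => [|c r IH]; first by rewrite set_nil setU0 lerDl.
rewrite set_cons; set Y' := [set:: r] in IH *.
rewrite setUCA; have [cXY|cXY] := boolP (c \in X :|: Y').
  rewrite (setUidPr _) ?sub1set //.
  by apply: (le_trans IH); rewrite lerD2l; apply/g_mono/subsetUr.
have := g_dim _ _ c (subsetUr X Y') cXY; lra.
Qed.

Lemma sum_setD1 (h : {set T} -> R) (i : T) :
  \sum_(A : {set T}) h (A :\ i) = 2 * \sum_(A : {set T} | i \notin A) h A.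
Proof.
rewrite (bigID (fun A : {set T} => i \in A)) /= mulr2n mulrDl mul1r; congr (_ + _).
  pose flip (A : {set T}) := if i \in A then A :\ i else i |: A.
  have flipK : involutive flip.
    move=> A; rewrite /flip; case iA: (i \in A).
      by rewrite setD11 setD1K.
    by rewrite setU11 setU1K ?iA.
  rewrite (reindex_inj (inv_inj flipK)); apply: eq_big => A.
    by rewrite /flip; case iA: (i \in A); rewrite ?setD11 ?setU11.
  by rewrite /flip; case: ifP => iA; rewrite ?setD11 // setU1K ?iA.
apply: eq_bigr => A iA; congr h.
by apply/setP => x; rewrite !inE; case: eqP => // ->; apply/esym/negbTE.
Qed.

Lemma subadditive_sampling (g : {set T} -> R) (i : T) :
  (forall X Y, g (X :|: Y) <= g X + g Y) ->
  g [set~ i] * (2 ^ #|T|)%:R <= 4 * \sum_(A : {set T} | i \notin A) g A.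
Proof.
move=> g_sub.
have split_all A : g [set~ i] <= g (A :\ i) + g (~: A :\ i).
  suff -> : [set~ i] = (A :\ i) :|: (~: A :\ i) by apply: g_sub.
  by apply/setP => x; rewrite !inE; case: (x == i); case: (x \in A).
have : \sum_(A : {set T}) g [set~ i] <=
       \sum_(A : {set T}) (g (A :\ i) + g (~: A :\ i)).
  by apply: ler_sum => A _; apply: split_all.
have card_subsets : #|{set T}| = (2 ^ #|T|)%N.
  by rewrite -[LHS]cardsT -powersetT card_powerset cardsT.
rewrite sumr_const card_subsets big_split /=.
have -> : \sum_(A : {set T}) g (~: A :\ i) = \sum_(A : {set T}) g (A :\ i).
  by rewrite [RHS](reindex_inj (@setC_inj _)).
rewrite sum_setD1 mulr_natr; lra.
Qed.

End SetFunctions.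

Lemma upd_id n k (s : profile n k) j x : s j = x -> upd s j x = s.
Proof. by move=> <-; apply/ffunP=> t; rewrite ffunE; case: eqP => // ->. Qed.

Lemma upd_upd n k (s : profile n k) j x y : upd (upd s j x) j y = upd s j y.
Proof. by apply/ffunP=> t; rewrite !ffunE; case: eqP. Qed.

Lemma zeroOn_le n k (s : profile n k) (Y Z : {set 'I_n}) : Y \subset Z ->
  forall t, (zeroOn Y s t <= zeroOn Z s t)%N.
Proof. by move=> /subsetP YZ t; rewrite !ffunE; case: ifP => [/YZ -> //|_]; case: ifP. Qed.

Lemma zeroOn_setU1 n k (s : profile n k) (c : 'I_n) (Y : {set 'I_n}) :
  zeroOn (c |: Y) s = upd (zeroOn Y s) c (s c).
Proof. by apply/ffunP=> t; rewrite !ffunE !inE; case: eqP => [->|]. Qed.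

Lemma zeroOn_notin n k (s : profile n k) (c : 'I_n) (Y : {set 'I_n}) : c \notin Y ->
  zeroOn Y s = upd (zeroOn Y s) c (ordZero (s c)).
Proof. by move=> cY; rewrite upd_id // ffunE (negbTE cY). Qed.

Section ProfileFunctions.
Variables (R : realFieldType) (n k : nat) (f : profile n k -> R).
Hypothesis f_ge0 : forall s, 0 <= f s.
Hypothesis f_mono : forall s j (x y : 'I_k), (x <= y)%N -> f (upd s j x) <= f (upd s j y).
Hypothesis f_sos : forall j (s s' : profile n k) (x y : 'I_k), (x <= y)%N ->
  (forall t, t != j -> (s' t <= s t)%N) ->
  f (upd s j y) - f (upd s j x) <= f (upd s' j y) - f (upd s' j x).

(* Coordinatewise monotonicity gives monotonicity for the product order,
   by moving from a to b one coordinate at a time. *)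
Lemma profile_mono_le (a b : profile n k) : (forall t, (a t <= b t)%N) -> f a <= f b.
Proof.
move=> ab.
pose splice (r : seq 'I_n) : profile n k := [ffun j => if j \in r then b j else a j].
have -> : a = splice [::] by apply/ffunP=> t; rewrite ffunE.
have -> : b = splice (enum 'I_n) by apply/ffunP=> t; rewrite ffunE mem_enum.
elim: (enum 'I_n) => // c r IH; apply: (le_trans IH).
have -> : splice (c :: r) = upd (splice r) c (b c).
  by apply/ffunP=> t; rewrite !ffunE inE; case: eqP => [->|].
rewrite -{1}(upd_id (erefl (splice r c))); apply: f_mono.
by rewrite ffunE; case: ifP.
Qed.

Lemma upd_le (s : profile n k) j (x : 'I_k) : (x <= s j)%N -> f (upd s j x) <= f s.
Proof. by move=> x_le; apply: profile_mono_le => t; rewrite ffunE; case: eqP => // ->. Qed.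

Lemma upd_ge (s : profile n k) j (x : 'I_k) : (s j <= x)%N -> f s <= f (upd s j x).
Proof. by move=> le_x; apply: profile_mono_le => t; rewrite ffunE; case: eqP => // ->. Qed.

(* One step of the threshold decomposition: by SOS, the increment of f when
   agent i's signal goes from l-1 to l is at most the increment at the capped
   profile capAt l s, which in turn is at most f (capAt l s). *)
Lemma sos_increment_le_cap (s : profile n k) i (l : 'I_k) :
  (l <= s i)%N -> f (upd s i l) - f (upd s i (ordPred l)) <= f (capAt l s).
Proof.
move=> l_si; set c := capAt l s.
have ci : c i = l by apply: val_inj; rewrite ffunE l_si.
have c_le t : t != i -> (c t <= s t)%N by move=> _; rewrite ffunE; case: ifP.
have := @f_sos i s c (ordPred l) l (leq_pred l) c_le; rewrite (upd_id ci).
have := f_ge0 (upd c i (ordPred l)); lra.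
Qed.

(* Telescoping the increments from 0 to s i bounds f s by the values at the
   capped profiles capAt l s (1 <= l <= s i) plus the value with s i zeroed. *)
Lemma threshold_telescope (s : profile n k) i :
  f s <= \sum_(l : 'I_k | (0 < l <= s i)%N) f (capAt l s)
         + f (upd s i (ordZero (s i))).
Proof.
suff partial t (ht : (t < k)%N) : (t <= s i)%N ->
    f (upd s i (Ordinal ht)) <= \sum_(l : 'I_k | (0 < l <= t)%N) f (capAt l s)
                                + f (upd s i (ordZero (s i))).
  by rewrite -{1}(@upd_id _ _ s i (Ordinal (ltn_ord (s i)))) ?partial //; apply: val_inj.
elim: t ht => [|t IH] ht t_si.
  rewrite big_pred0 ?add0r => [|l]; last by rewrite ltnNge andNb.
  by rewrite (_ : Ordinal ht = ordZero (s i)) //; apply: val_inj.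
have ht' : (t < k)%N by apply: ltnW.
rewrite (bigD1 (Ordinal ht)) //= (eq_bigl (fun l : 'I_k => (0 < l <= t)%N)); last first.
  by move=> l; rewrite -val_eqE /=; apply/idP/idP; lia.
have := IH ht' (ltnW t_si).
have := @sos_increment_le_cap s i (Ordinal ht) t_si.
have -> : ordPred (Ordinal ht) = Ordinal ht' by apply: val_inj.
lra.
Qed.

(* Revealing more signals has diminishing returns: this is SOS applied to the
   coordinate c of the profiles zeroOn Y s <= zeroOn Z s. *)
Lemma zeroOn_diminishing_returns (s : profile n k) (Y Z : {set 'I_n}) c :
  Y \subset Z -> c \notin Z ->
  f (zeroOn (c |: Z) s) - f (zeroOn Z s) <= f (zeroOn (c |: Y) s) - f (zeroOn Y s).
Proof.
move=> YZ cZ; have cY : c \notin Y by apply: contra cZ; apply: (subsetP YZ).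
rewrite !zeroOn_setU1 {2}(zeroOn_notin s cZ) {2}(zeroOn_notin s cY).
by apply: f_sos => // t _; apply: zeroOn_le.
Qed.

Lemma value_decomposition (s : profile n k) i :
  f s <= \sum_(l : 'I_k | (0 < l)%N) (if (l <= s i)%N then f (capAt l s) else 0)
       + 4 / (2 ^ n)%:R *
         \sum_(A : {set 'I_n}) (if i \in ~: A then f (zeroOn A s) else 0).
Proof.
apply: (le_trans (threshold_telescope s i)); rewrite -big_mkcondr lerD2l.
pose g A := f (zeroOn A s).
have g_sub X Y : g (X :|: Y) <= g X + g Y.
  apply: diminishing_returns_subadditive X Y => [Y Z YZ|Y Z c|].
  - by apply: profile_mono_le; apply: zeroOn_le.
  - exact: zeroOn_diminishing_returns.
  - exact: f_ge0.
have := subadditive_sampling i g_sub; rewrite card_ord -big_mkcond.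
have -> : upd s i (ordZero (s i)) = zeroOn [set~ i] s.
  by apply/ffunP => x; rewrite !ffunE !inE; case: eqP => [->|].
under eq_bigl do rewrite in_setC.
have pos2n : 0 < (2 ^ n)%:R :> R by rewrite ltr0n expn_gt0.
by rewrite mulrAC ler_pdivlMr.
Qed.

End ProfileFunctions.

Lemma restrict_feasible n m (T : allocation n m) (S : {set 'I_n}) : feasible T ->
  feasible_on S (fun i => if i \in S then T i else set0).
Proof.
move=> T_feas; split => [i j ij|i /negbTE -> //].
case: ifP => _; case: ifP => _; rewrite -setI_eq0 ?setI0 ?set0I //.
by rewrite setI_eq0; apply: T_feas.
Qed.

Section Mechanisms.
Variables (R : realFieldType) (n m k : nat) (v : valuation R n m k).
Hypothesis v_valid : valid_valuations v.
Variable ch : {set 'I_n} -> ('I_n -> {set 'I_m} -> R) -> allocation n m.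
Hypothesis ch_opt : argmax_rule ch.

Lemma v_ge0 i T s : 0 <= v i T s.
Proof. by case: v_valid. Qed.

Lemma v_set0 i s : v i set0 s = 0.
Proof. by case: v_valid. Qed.

Lemma v_mono i T s j (x y : 'I_k) :
  (x <= y)%N -> v i T (upd s j x) <= v i T (upd s j y).
Proof. by case: v_valid => _ _ mono _ _; apply: mono. Qed.

Lemma v_sos i T j (s s' : profile n k) (x y : 'I_k) : (x <= y)%N ->
  (forall t, t != j -> (s' t <= s t)%N) ->
  v i T (upd s j y) - v i T (upd s j x) <= v i T (upd s' j y) - v i T (upd s' j x).
Proof. by case: v_valid => _ _ _ _ sos; apply: sos. Qed.

Lemma argmax_outside (S : {set 'I_n}) w i : i \notin S -> ch S w i = set0.
Proof. by move=> iS; have [[_ ->]] := ch_opt S w. Qed.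

(* Optimality of the rule against the restriction of any feasible T to S,
   with values computed at a profile p below the true profile s. *)
Lemma argmax_welfare_ge (S : {set 'I_n}) (p s : profile n k) (T : allocation n m) :
  feasible T -> (forall t, (p t <= s t)%N) ->
  \sum_(i in S) v i (T i) p <=
  \sum_i v i (ch S (fun i T => if i \in S then v i T p else 0) i) s.
Proof.
move=> T_feas p_le.
set w := fun (i : 'I_n) (B : {set 'I_m}) => if i \in S then v i B p else 0.
have [_ /(_ _ (restrict_feasible S T_feas))] := ch_opt S w.
rewrite (eq_bigr (fun i => v i (T i) p)) => [|i iS]; last by rewrite /w iS.
move/le_trans; apply.
rewrite [X in _ <= X](bigID (mem S)) /= -[X in X <= _]addr0.
apply: lerD; last by apply: sumr_ge0 => i _; apply: v_ge0.
apply: ler_sum => i iS; rewrite /w iS.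
exact: (profile_mono_le (v_mono i _) p_le).
Qed.

Lemma RT_loser (l : 'I_k) (s : profile n k) i : (s i < l)%N ->
  (RT_mech v ch l s).1 i = set0 /\ (RT_mech v ch l s).2 i = 0.
Proof.
move=> si_lt; have iS : i \notin [set j | (l <= s j)%N] by rewrite inE -ltnNge.
by rewrite /RT_mech /= (negbTE iS) argmax_outside.
Qed.

Lemma RT_winner_pays (l : 'I_k) (s : profile n k) i : (l <= s i)%N ->
  (RT_mech v ch l s).2 i = v i ((RT_mech v ch l s).1 i) (upd s i (ordPred l)).
Proof. by move=> l_si; rewrite /RT_mech /= inE l_si. Qed.

Lemma RT_report_invariant (l : 'I_k) (s : profile n k) i (x : 'I_k) :
  (l <= s i)%N -> (l <= x)%N ->
  (RT_mech v ch l (upd s i x)).1 = (RT_mech v ch l s).1 /\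
  (RT_mech v ch l (upd s i x)).2 i = (RT_mech v ch l s).2 i.
Proof.
move=> l_si l_x.
have same_S : [set j | (l <= upd s i x j)%N] = [set j | (l <= s j)%N].
  by apply/setP => j; rewrite !inE ffunE; case: eqP => // ->; rewrite l_x l_si.
have same_cap : capAt l (upd s i x) = capAt l s.
  by apply/ffunP => j; rewrite !ffunE; case: eqP => // ->; rewrite l_x l_si.
by rewrite /RT_mech /= same_S same_cap upd_upd.
Qed.

(* Random Threshold is ex-post IC-IR for every fixed threshold l: it is a
   posted-price mechanism for agent i with price her value at signal l-1. *)
Lemma RT_exPost_IC_IR (l : 'I_k) : exPost_IC_IR v (RT_mech v ch l).
Proof.
move=> s i x; cbv beta zeta.
have ix : upd s i x i = x by rewrite ffunE eqxx.
have report_loses : (x < l)%N ->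
    (RT_mech v ch l (upd s i x)).1 i = set0 /\ (RT_mech v ch l (upd s i x)).2 i = 0.
  by move=> x_lt; apply: RT_loser; rewrite ix.
have [si_lt | l_si] := ltnP (s i) l.
  have [-> ->] := RT_loser si_lt; rewrite v_set0 subr0; split => //.
  have [x_lt | l_x] := ltnP x l.
    by have [-> ->] := report_loses x_lt; rewrite v_set0 subr0.
  rewrite RT_winner_pays ?ix // upd_upd subr_le0.
  by apply: (upd_ge (v_mono i _)); rewrite /=; lia.
have truth_ge0 : 0 <= v i ((RT_mech v ch l s).1 i) s - (RT_mech v ch l s).2 i.
  by rewrite RT_winner_pays // subr_ge0; apply: (upd_le (v_mono i _)); rewrite /=; lia.
split => //; have [x_lt | l_x] := ltnP x l.
  by have [-> ->] := report_loses x_lt; rewrite v_set0 subr0.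
by have [-> ->] := RT_report_invariant l_si l_x.
Qed.

(* Random Sampling is ex-post IC-IR for every fixed split: nobody pays, and
   the bundle of an agent in B does not depend on her own report. *)
Lemma RS_exPost_IC_IR (A : {set 'I_n}) : exPost_IC_IR v (RS_mech v ch A).
Proof.
move=> s i x /=; split; first by rewrite subr0 v_ge0.
have [iB | iA] := boolP (i \in ~: A); last by rewrite !argmax_outside // v_set0.
suff -> : zeroOn A (upd s i x) = zeroOn A s by [].
apply/ffunP => j; rewrite !ffunE; case: eqP => [->|//].
by move: iB; rewrite inE => /negbTE ->; apply: val_inj.
Qed.

End Mechanisms.

(* Welfare bound: summing value_decomposition over the agents of a feasible
   allocation T, and charging each threshold term (resp. sampling term) to
   the allocation chosen by Random Threshold at l (resp. Random Sampling at A),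
   which is optimal for the reduced values on its participants. *)
Lemma welfare_le_RT_RS (R : realFieldType) (n m k : nat) (v : valuation R n m k)
  (chRT chRS : {set 'I_n} -> ('I_n -> {set 'I_m} -> R) -> allocation n m)
  (s : profile n k) (T : allocation n m) :
  valid_valuations v -> argmax_rule chRT -> argmax_rule chRS -> feasible T ->
  welfare v T s <= \sum_(l : 'I_k | (0 < l)%N) welfare v (RT_mech v chRT l s).1 s
     + 4 / (2 ^ n)%:R * \sum_(A : {set 'I_n}) welfare v (RS_mech v chRS A s).1 s.
Proof.
move=> v_valid RT_opt RS_opt T_feas.
have per_agent i := value_decomposition (v_ge0 v_valid i (T i))
  (v_mono v_valid i (T i)) (v_sos v_valid i (T i)) s i.
apply: (le_trans (ler_sum _ (fun i _ => per_agent i))).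
rewrite big_split /= -mulr_sumr; apply: lerD.
  rewrite exchange_big /=; apply: ler_sum => l _; rewrite -big_mkcond /=.
  rewrite (eq_bigl (fun i => i \in [set j | (l <= s j)%N])) => [|i]; last by rewrite inE.
  apply: (argmax_welfare_ge v_valid RT_opt _ T_feas) => t.
  by rewrite ffunE; case: ifP => //; lia.
apply: ler_wpM2l; first by rewrite divr_ge0 // ler0n.
rewrite exchange_big /=; apply: ler_sum => A _; rewrite -big_mkcond /=.
apply: (argmax_welfare_ge v_valid RS_opt _ T_feas) => t.
by rewrite ffunE; case: ifP.
Qed.

(* The mixing weights of k-HL turn the bound X + 4/N * Y into (k+3) times
   the expected welfare, with a = k-1 and a + 4 = k+3. *)
Lemma mixture_bound (R : realFieldType) (a b N X Y W : R) :
  0 < a -> 0 < N -> b = a + 4 -> W <= X + 4 / N * Y ->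
  W / b <= a / b * (a^-1 * X) + (1 - a / b) * (N^-1 * Y).
Proof.
move=> a_gt0 N_gt0 b_def W_le.
have b_gt0 : 0 < b by rewrite b_def ltr_wpDr.
have -> : a / b * (a^-1 * X) + (1 - a / b) * (N^-1 * Y) = (X + 4 / N * Y) / b.
  by rewrite b_def; field; rewrite !lt0r_neq0 // ltr_wpDr.
by rewrite ler_wpM2r // invr_ge0 ltW.
Qed.

Theorem mainTheorem8 (R : realFieldType) (n m k : nat) (v : valuation R n m k)
  (chRT chRS : {set 'I_n} -> ('I_n -> {set 'I_m} -> R) -> allocation n m) :
  (2 <= k)%N ->
  valid_valuations v ->
  argmax_rule chRT -> argmax_rule chRS ->
  (* universally ex-post IC-IR: every deterministic mechanism in the support *)
  ((forall l : 'I_k, (0 < l)%N -> exPost_IC_IR v (RT_mech v chRT l)) /\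
   (forall A : {set 'I_n}, exPost_IC_IR v (RS_mech v chRS A))) /\
  (* (k+3)-approximation of the optimal social welfare *)
  (forall (s : profile n k) (T : allocation n m), feasible T ->
     welfare v T s / (k + 3)%:R <= kHL_welfare v chRT chRS s).
Proof.
move=> k_ge2 v_valid RT_opt RS_opt; split; first split.
- by move=> l _; apply: RT_exPost_IC_IR.
- by move=> A; apply: RS_exPost_IC_IR.
move=> s T T_feas; apply: mixture_bound.
- by rewrite ltr0n; lia.
- by rewrite ltr0n expn_gt0.
- by rewrite -natrD; congr (_%:R); lia.
- exact: welfare_le_RT_RS.
Qed.
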